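(* For every $\rho\in\mathcal{S}(\mathbb{C}^2)$ one has $D_z^2\big(\rho,\tfrac12(I+\sigma_z)\big)=2-2(\mathbf{b}_\rho)_3$.
   Context: Let $\mathcal{H}=\mathbb{C}^2$, $\mathcal{H}^*$ its dual space, and $\mathcal{S}(\mathcal{H})$ the set of density operators on $\mathcal{H}$. For a linear operator $A$ on $\mathcal{H}$, its transpose $A^T$ is the operator on $\mathcal{H}^*$ defined by $(A^T\varphi)(x)=\varphi(Ax)$. $\mathcal{C}(\rho,\omega)=\{\Pi\in\mathcal{S}(\mathcal{H}\otimes\mathcal{H}^* ):\ \mathrm{tr}_{\mathcal{H}^*}[\Pi]=\omega,\ \mathrm{tr}_{\mathcal{H}}[\Pi]=\rho^T\}$. The Pauli matrices are $\sigma_1=\begin{bmatrix}0&1\\1&0\end{bmatrix}$, $\sigma_2=\begin{bmatrix}0&-i\\i&0\end{bmatrix}$, $\sigma_3=\sigma_z=\begin{bmatrix}1&0\\0&-1\end{bmatrix}$. $C_z=(\sigma_z\otimes I^T-I\otimes\sigma_z^T)^2$ and $D_z^2(\rho,\omega)=\inf\{\mathrm{tr}[\Pi C_z]:\Pi\in\mathcal{C}(\rho,\omega)\}$. The Bloch vector of $\rho$ is $\mathbf{b}_\rho=(\mathrm{tr}[\sigma_j\rho])_{j=1}^3$. *)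

From HB Require Import structures.
From mathcomp Require Import all_boot all_order all_algebra.
From mathcomp Require Import classical_sets reals.
From mathcomp.real_closed Require Import complex mxtens.
Set Implicit Arguments. Unset Strict Implicit. Unset Printing Implicit Defensive.
Import Order.TTheory GRing.Theory Num.Theory.
Local Open Scope ring_scope.
Local Open Scope complex_scope.

Section QOT.
Variable R : realType.
Local Notation C := R[i].

Definition adjmx m n (A : 'M[C]_(m, n)) : 'M[C]_(n, m) := map_mx conjc A^T.

Definition psd n (A : 'M[C]_n) : Prop :=
  adjmx A = A /\ forall v : 'cV[C]_n, 0 <= (adjmx v *m A *m v) 0 0.

Definition density n (A : 'M[C]_n) : Prop := psd A /\ \tr A = 1.

(* partial traces on C^m (x) C^n, index (i,j) |-> i*n + j as in tensmx *)
Definition ptrace2 m n (P : 'M[C]_(m * n)) : 'M[C]_m :=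
  \matrix_(a, b) \sum_(j < n) P (mxtens_index (a, j)) (mxtens_index (b, j)).
Definition ptrace1 m n (P : 'M[C]_(m * n)) : 'M[C]_n :=
  \matrix_(a, b) \sum_(k < m) P (mxtens_index (k, a)) (mxtens_index (k, b)).

(* couplings C(rho, omega) in S(H (x) dual H): tr over dual H P = omega, tr_H P = rho^T.
   Operators on H^* are written in the dual basis, so the transpose of an
   operator is the matrix transpose. *)
Definition coupling n (rho omega : 'M[C]_n) (P : 'M[C]_(n * n)) : Prop :=
  density P /\ ptrace2 P = omega /\ ptrace1 P = rho^T.

Definition sigma_z : 'M[C]_2 :=
  \matrix_(a, b) (if a == b then (if a == 0 then 1 else -1) else 0).

Definition Cz : 'M[C]_(2 * 2) :=
  let A := sigma_z *t (1%:M : 'M[C]_2)^T - (1%:M : 'M[C]_2) *t sigma_z^T in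
  A *m A.

Definition Dz2 (rho omega : 'M[C]_2) : R :=
  inf [set x : R | exists P : 'M[C]_(2 * 2),
         coupling rho omega P /\ \tr (P *m Cz) = x%:C].

Definition bloch3 (rho : 'M[C]_2) : C := \tr (sigma_z *m rho).

End QOT.

From HB Require Import structures.
From mathcomp Require Import all_boot all_order all_algebra.
From mathcomp Require Import classical_sets reals ring.
From mathcomp.real_closed Require Import complex mxtens.
Set Implicit Arguments. Unset Strict Implicit. Unset Printing Implicit Defensive.
Import Order.TTheory GRing.Theory Num.Theory.
Local Open Scope ring_scope.
Local Open Scope complex_scope.

(* The target state (I + sigma_z)/2 is the pure state |0><0|.  The first
   marginal of any coupling P is then zero at |1>, and since the diagonal of P
   is nonnegative, P has no diagonal weight on |1> (x) H^*.  The cost C_z is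
   diagonal with weight 4 exactly on |0,1> and |1,0>, so every coupling costs
   4 P_(01,01), which the second marginal identifies with 4 rho_11.  The
   product coupling |0><0| (x) rho^T exists, hence the infimum is
   4 rho_11 = 2 - 2 (rho_00 - rho_11). *)

Lemma sum_mxtens_index (V : nmodType) m n (F : 'I_(m * n) -> V) :
  \sum_k F k = \sum_i \sum_j F (mxtens_index (i, j)).
Proof.
rewrite (reindex (@mxtens_index m n)) /=; last first.
  by exists (@mxtens_unindex m n) => k _; rewrite (mxtens_indexK, mxtens_unindexK).
by rewrite pair_big; apply: eq_bigr => -[i j].
Qed.

Lemma sum_ord2 (V : nmodType) (F : 'I_2 -> V) : \sum_i F i = F 0 + F 1.
Proof. by rewrite big_ord_recl big_ord1; congr (_ + F _); apply: val_inj. Qed.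

Section TensorTrace.
Variables (K : comPzRingType) (m n : nat).

Lemma mxtrace_tens (A : 'M[K]_m) (B : 'M[K]_n) : \tr (A *t B) = \tr A * \tr B.
Proof.
rewrite /mxtrace sum_mxtens_index mulr_suml; apply: eq_bigr => a _.
by rewrite mulr_sumr; apply: eq_bigr => b _; rewrite tensmxE.
Qed.

Lemma mxtrace_delta (i : 'I_m) : \tr (delta_mx i i : 'M[K]_m) = 1.
Proof.
rewrite /mxtrace (bigD1 i) //= mxE !eqxx big1 ?addr0 // => j /negbTE ji.
by rewrite mxE ji.
Qed.

End TensorTrace.

Section DensityMatrices.
Variable R : realType.
Local Notation C := R[i].

Lemma ptrace2_tens m n (A : 'M[C]_m) (B : 'M[C]_n) : ptrace2 (A *t B) = \tr B *: A.
Proof.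
apply/matrixP => a b; rewrite !mxE mulrC /mxtrace mulr_sumr.
by apply: eq_bigr => j _; rewrite tensmxE.
Qed.

Lemma ptrace1_tens m n (A : 'M[C]_m) (B : 'M[C]_n) : ptrace1 (A *t B) = \tr A *: B.
Proof.
apply/matrixP => a b; rewrite !mxE /mxtrace mulr_suml.
by apply: eq_bigr => k _; rewrite tensmxE.
Qed.

Lemma ge0_complex_real (z : C) : 0 <= z -> exists r : R, z = r%:C.
Proof. by case: z => a b; rewrite lecE /= => /andP[/eqP -> _]; exists a. Qed.

Lemma adjmx_tens m n p q (A : 'M[C]_(m, n)) (B : 'M[C]_(p, q)) :
  adjmx (A *t B) = adjmx A *t adjmx B.
Proof. by rewrite /adjmx trmx_tens map_mxT. Qed.

Lemma adjmx_delta m n (i : 'I_m) (j : 'I_n) :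
  adjmx (delta_mx i j : 'M[C]_(m, n)) = delta_mx j i.
Proof. by apply/matrixP => a b; rewrite !mxE rmorph_nat andbC. Qed.

Lemma quad_formE n (A : 'M[C]_n) (v : 'cV[C]_n) :
  (adjmx v *m A *m v) 0 0 = \sum_i \sum_j conjc (v i 0) * A i j * v j 0.
Proof.
rewrite mxE; under eq_bigr do rewrite mxE mulr_suml.
rewrite exchange_big; apply: eq_bigr => i _; apply: eq_bigr => j _.
by rewrite !mxE.
Qed.

Lemma psd_diag_ge0 n (A : 'M[C]_n) i : psd A -> 0 <= A i i.
Proof.
move=> [_ /(_ (delta_mx i 0))].
by rewrite adjmx_delta -rowE -colE !mxE.
Qed.

Lemma psd_trmx n (A : 'M[C]_n) : psd A -> psd A^T.
Proof.
move=> [herm pos]; split; first by rewrite /adjmx -map_trmx -/(adjmx A) herm.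
move=> v; pose w := map_mx conjc v.
rewrite [X in 0 <= X](_ : _ = (adjmx w *m A *m w) 0 0) ?pos //.
rewrite !quad_formE [LHS]exchange_big; apply: eq_bigr => i _; apply: eq_bigr => j _.
by rewrite !mxE conjcK; ring.
Qed.

Lemma psd_delta_tens m n (i : 'I_m) (A : 'M[C]_n) : psd A -> psd (delta_mx i i *t A).
Proof.
move=> [herm pos]; split; first by rewrite adjmx_tens adjmx_delta herm.
move=> v; pose w : 'cV[C]_n := \col_k v (mxtens_index (i, k)) 0.
rewrite [X in 0 <= X](_ : _ = (adjmx w *m A *m w) 0 0) ?pos //.
rewrite !quad_formE sum_mxtens_index (bigD1 i) //= [X in _ + X]big1 ?addr0; last first.
  move=> a /negbTE ai; apply: big1 => b _; apply: big1 => y _.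
  by case: (mxtens_indexP y) => c d; rewrite tensmxE mxE ai mul0r mulr0 mul0r.
apply: eq_bigr => b _; rewrite sum_mxtens_index (bigD1 i) //= [X in _ + X]big1 ?addr0; last first.
  move=> c /negbTE ci; apply: big1 => d _.
  by rewrite tensmxE mxE ci andbF mul0r mulr0 mul0r.
by apply: eq_bigr => d _; rewrite tensmxE !mxE eqxx mul1r.
Qed.

Lemma coupling_delta_tens n (rho : 'M[C]_n) (i : 'I_n) :
  density rho -> coupling rho (delta_mx i i) (delta_mx i i *t rho^T).
Proof.
move=> [rho_psd tr1]; split; [split | split].
- exact/psd_delta_tens/psd_trmx.
- by rewrite mxtrace_tens mxtrace_delta mxtrace_tr tr1 mul1r.
- by rewrite ptrace2_tens mxtrace_tr tr1 scale1r.
- by rewrite ptrace1_tens mxtrace_delta scale1r.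
Qed.

Local Notation ix a b := (@mxtens_index 2 2 (a, b)).

Lemma mxtrace2 (A : 'M[C]_2) : \tr A = A 0 0 + A 1 1.
Proof. exact: sum_ord2. Qed.

Lemma half1Dsigma_zE : 2^-1 *: (1%:M + sigma_z R) = delta_mx 0 0.
Proof.
apply/matrixP => a b; rewrite !mxE.
by case: a b => -[|[|//]] ? [[|[|//]] ?] /=; rewrite ?addrN ?addr0 ?mulr0 // -mulr2n mulVf ?pnatr_eq0.
Qed.

Lemma CzE (a b c d : 'I_2) :
  Cz R (ix a b) (ix c d) = if (a == c) && (b == d) && (a != b) then 4 else 0.
Proof.
rewrite /Cz mxE sum_mxtens_index !sum_ord2 !mxE !mxtens_indexK /=.
by case: a b c d => -[|[|//]] ? [[|[|//]] ?] [[|[|//]] ?] [[|[|//]] ?] /=; ring.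
Qed.

Lemma mxtrace_mulmx_Cz (P : 'M[C]_(2 * 2)) :
  \tr (P *m Cz R) = 4 * (P (ix 0 1) (ix 0 1) + P (ix 1 0) (ix 1 0)).
Proof.
rewrite /mxtrace sum_mxtens_index !sum_ord2 !mxE !sum_mxtens_index !sum_ord2 !CzE /=.
ring.
Qed.

Lemma coupling_delta0_mxtrace_Cz (rho : 'M[C]_2) (P : 'M[C]_(2 * 2)) :
  coupling rho (delta_mx 0 0) P -> \tr (P *m Cz R) = 4 * rho 1 1.
Proof.
move=> [[P_psd _] [P2 P1]].
have := congr1 (fun M : 'M[C]_2 => M 1 1) P2; rewrite !mxE sum_ord2 /= => /eqP.
rewrite paddr_eq0 ?psd_diag_ge0 // => /andP[/eqP P10 /eqP P11].
have := congr1 (fun M : 'M[C]_2 => M 1 1) P1; rewrite !mxE sum_ord2 P11 addr0 => P01.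
by rewrite mxtrace_mulmx_Cz P10 P01 addr0.
Qed.

Lemma Dz2_delta0 (rho : 'M[C]_2) : density rho -> (Dz2 rho (delta_mx 0 0))%:C = 4 * rho 1 1.
Proof.
move=> rho_dens; have [r r11] := ge0_complex_real (psd_diag_ge0 1 rho_dens.1).
have r4 : 4 * rho 1 1 = (4 * r)%:C by rewrite r11 rmorphM rmorph_nat.
rewrite r4; congr (_%:C); rewrite /Dz2 -[RHS]inf1; congr inf.
apply/seteqP; split => [x [P [P_coupling trP]] | x ->].
  by apply: complexI; rewrite -trP -r4 (coupling_delta0_mxtrace_Cz P_coupling).
exists (delta_mx 0 0 *t rho^T); split; first exact: coupling_delta_tens.
by rewrite -r4 (coupling_delta0_mxtrace_Cz (coupling_delta_tens 0 rho_dens)).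
Qed.

Lemma bloch3E (rho : 'M[C]_2) : bloch3 rho = rho 0 0 - rho 1 1.
Proof. by rewrite /bloch3 mxtrace2 !mxE !sum_ord2 !mxE /=; ring. Qed.

End DensityMatrices.

Theorem mainTheorem5 (R : realType) (rho : 'M[R[i]]_2) :
  density rho ->
  (Dz2 rho (2^-1 *: (1%:M + sigma_z R)))%:C = 2 - 2 * bloch3 rho.
Proof.
move=> rho_dens; rewrite half1Dsigma_zE Dz2_delta0 // bloch3E.
have tr1 : rho 0 0 + rho 1 1 = 1 by rewrite -mxtrace2 rho_dens.2.
have -> : rho 0 0 = 1 - rho 1 1 by rewrite -tr1 addrK.
ring.
Qed.
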